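(* There is no automorphism $\varphi$ of $E$ of type 4 which is a translation by a constant, i.e. such that for some basis $\{e_n\}_{n\in\mathbb{N}}$ of $L$ and some fixed $P\in E$ containing a summand of length $\ge2$, one has $\varphi(e_n)=-e_n+2P$ for all $n\in\mathbb{N}$.
   Context: $F$ is a field of characteristic zero, $L$ an infinite-dimensional $F$-vector space, $E$ the Grassmann algebra of $L$ (for a basis $\{e_n\}$ of $L$, basis $1$ and monomials $e_{i_1}\cdots e_{i_m}$, $i_1<\cdots<i_m$, of length $m$). An automorphism $\varphi$ of $E$ with $\varphi^2=\mathrm{id}$ is of type 4 if for every basis $\gamma$ of $L$ no element $v\in\gamma$ satisfies $\varphi(v)=\pm v$. *)

(* Grassmann algebra of a countably infinite-dimensional
   space L with basis indexed by nat, built concretely on coefficient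
   functions {fset nat} -> F (coefficient of the monomial e_A). *)
From HB Require Import structures.
From mathcomp Require Import all_boot all_order all_algebra.
From mathcomp Require Import finmap.
Set Implicit Arguments. Unset Strict Implicit. Unset Printing Implicit Defensive.
Import GRing.Theory.
Local Open Scope ring_scope.


Section Grassmann.
Variable F : fieldType.

(* coefficient functions; x A = coefficient of the monomial e_A,
   e_A = e_{a1} ... e_{am} with a1 < ... < am the elements of A *)
Definition GE := {fset nat} -> F.

Definition zeroE : GE := fun _ => 0.
Definition addE (x y : GE) : GE := fun A => x A + y A.
Definition oppE (x : GE) : GE := fun A => - x A.
Definition scaleE (k : F) (x : GE) : GE := fun A => k * x A.
Definition monomE (A : {fset nat}) : GE := fun B => if B == A then 1 else 0.
Definition oneE : GE := monomE fset0.

(* sign of e_A e_B = gsign A B * e_(A u B) for disjoint A, B *)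
Definition gsign (A B : {fset nat}) : F :=
  (-1) ^+ (\sum_(a <- A) \sum_(b <- B) ((b < a)%N : nat))%N.

Definition mulE (x y : GE) : GE := fun C =>
  \sum_(A <- fpowerset C) gsign A (C `\` A)%fset * x A * y (C `\` A)%fset.

(* elements of E: finitely supported coefficient functions *)
Definition inGr (x : GE) : Prop :=
  exists S : seq {fset nat}, forall A, x A != 0 -> A \in S.

(* elements of L: elements of E supported on monomials of length 1 *)
Definition inL (x : GE) : Prop := inGr x /\ forall A, x A != 0 -> #|` A| = 1%N.

Definition sumE n (k : 'I_n -> F) (f : 'I_n -> GE) : GE :=
  \big[addE/zeroE]_(i < n) scaleE (k i) (f i).

Definition basisL (gamma : GE -> Prop) : Prop :=
  (forall v, gamma v -> inL v) /\
  (forall n (f : 'I_n -> GE), injective f -> (forall i, gamma (f i)) ->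
     forall k : 'I_n -> F, sumE k f = zeroE -> forall i, k i = 0) /\
  (forall x, inL x -> exists n (f : 'I_n -> GE) (k : 'I_n -> F),
     (forall i, gamma (f i)) /\ x = sumE k f).

Definition basisFamL (e : nat -> GE) : Prop :=
  (forall n, inL (e n)) /\
  (forall n (k : 'I_n -> F), sumE k (fun i => e i) = zeroE -> forall i, k i = 0) /\
  (forall x, inL x -> exists n (k : 'I_n -> F), x = sumE k (fun i => e i)).

Definition autE (phi : GE -> GE) : Prop :=
  (forall x, inGr x -> inGr (phi x)) /\
  (forall k x y, inGr x -> inGr y ->
     phi (addE (scaleE k x) y) = addE (scaleE k (phi x)) (phi y)) /\
  (forall x y, inGr x -> inGr y -> phi (mulE x y) = mulE (phi x) (phi y)) /\
  phi oneE = oneE /\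
  (forall x y, inGr x -> inGr y -> phi x = phi y -> x = y) /\
  (forall y, inGr y -> exists2 x, inGr x & phi x = y).

Definition involE (phi : GE -> GE) : Prop := forall x, inGr x -> phi (phi x) = x.

(* type 4 (phi^2 = id is required separately) *)
Definition type4 (phi : GE -> GE) : Prop :=
  forall gamma, basisL gamma -> forall v, gamma v -> phi v <> v /\ phi v <> oppE v.

Definition hasLongSummand (P : GE) : Prop := exists A, (2 <= #|` A|)%N /\ P A != 0.

End Grassmann.

From mathcomp Require Import all_boot all_order all_algebra.
From mathcomp Require Import finmap.
From mathcomp Require Import ring.
From Stdlib Require Import FunctionalExtensionality.

(* If phi (e_n) = - e_n + 2 P for every n, the translation part cancels on
   differences, so phi (e_0 - e_1) = - (e_0 - e_1).  Replacing e_0 by e_0 - e_1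
   in {e_n} still gives a basis of L, and this basis contains a vector negated
   by phi, so phi is not of type 4. *)

Set Implicit Arguments. Unset Strict Implicit. Unset Printing Implicit Defensive.
Import GRing.Theory.
Local Open Scope ring_scope.

Section GrassmannBasis.
Variable F : fieldType.
Implicit Types (c : F) (x y : GE F) (g e : nat -> GE F).

Lemma inGr_addE_scaleE c x y : inGr x -> inGr y -> inGr (addE (scaleE c x) y).
Proof.
move=> [Sx x_supp] [Sy y_supp]; exists (Sx ++ Sy) => A; rewrite /addE /scaleE mem_cat.
have [x0 | /x_supp -> //] := eqVneq (x A) 0.
by rewrite x0 mulr0 add0r => /y_supp ->; rewrite orbT.
Qed.

Lemma inL_addE_scaleE c x y : inL x -> inL y -> inL (addE (scaleE c x) y).
Proof.
move=> [Gx x_deg] [Gy y_deg]; split; first exact: inGr_addE_scaleE.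
move=> A; rewrite /addE /scaleE.
have [x0 | /x_deg //] := eqVneq (x A) 0.
by rewrite x0 mulr0 add0r => /y_deg.
Qed.

Lemma sumE_eval n (k : 'I_n -> F) (f : 'I_n -> GE F) A :
  sumE k f A = \sum_(i < n) k i * f i A.
Proof. by rewrite /sumE (big_morph (fun x : GE F => x A) (id1 := 0) (op1 := +%R)). Qed.

Definition combE n (k : nat -> F) g : GE F := fun A => \sum_(i < n) k i * g i A.

Lemma sumE_combE n (k : nat -> F) g :
  sumE (fun i : 'I_n => k i) (fun i => g i) = combE n k g.
Proof. by apply: functional_extensionality => A; rewrite sumE_eval. Qed.

Definition nat_coef n (k : 'I_n -> F) (j : nat) : F := oapp k 0 (insub j).

Lemma nat_coefK n (k : 'I_n -> F) : (fun i : 'I_n => nat_coef k i) = k.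
Proof. by apply: functional_extensionality => i; rewrite /nat_coef valK. Qed.

Lemma basisFamLE e :
  basisFamL e <->
  [/\ forall n, inL (e n),
      forall n k, combE n k e = zeroE F -> forall i, (i < n)%N -> k i = 0
    & forall x, inL x -> exists n k, x = combE n k e].
Proof.
split=> [[e_inL [e_indep e_span]] | [e_inL e_indep e_span]]; [split | split; last split] => //.
- move=> n k; rewrite -sumE_combE => /e_indep k0 i lt_in.
  exact: (k0 (Ordinal lt_in)).
- move=> x /e_span [n [k ->]]; exists n, (nat_coef k).
  by rewrite -sumE_combE nat_coefK.
- move=> n k; rewrite -(nat_coefK k) sumE_combE => /e_indep k0 i.
  by have := k0 i (ltn_ord i); rewrite /nat_coef valK.
- move=> x /e_span [n [k ->]]; exists n, (fun i : 'I_n => k i).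
  by rewrite sumE_combE.
Qed.

Lemma combE_pad n m k g :
  combE (n + m) (fun i => if (i < n)%N then k i else 0) g = combE n k g.
Proof.
apply: functional_extensionality => A; rewrite /combE big_split_ord /=.
rewrite [X in _ + X]big1 ?addr0 => [|i _]; last by rewrite ltnNge leq_addr mul0r.
by apply: eq_bigr => i _; rewrite ltn_ord.
Qed.

Definition shear c g (n : nat) : GE F :=
  if n is 0 then addE (scaleE c (g 1%N)) (g 0%N) else g n.

Definition shear_coef c (k : nat -> F) (i : nat) : F :=
  k i + (if i == 1%N then c * k 0%N else 0).

Lemma combE_shear c g n k :
  (1 < n)%N -> combE n k (shear c g) = combE n (shear_coef c k) g.
Proof.
case: n => [|[|n]] // _; apply: functional_extensionality => A.
rewrite /combE !big_ord_recl /= /shear_coef /addE /scaleE /=.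
under [in RHS]eq_bigr do rewrite addr0.
ring.
Qed.

Lemma shearK c g : shear (- c) (shear c g) = g.
Proof.
apply: functional_extensionality => -[|n] //; apply: functional_extensionality => A.
by rewrite /shear /addE /scaleE /=; ring.
Qed.

Lemma basisFamL_shear c e : basisFamL e -> basisFamL (shear c e).
Proof.
case/basisFamLE=> e_inL e_indep e_span; apply/basisFamLE; split.
- by case=> [|n] //=; apply: inL_addE_scaleE.
- move=> n k sk0 i lt_in.
  pose kp j := if (j < n)%N then k j else 0.
  have kp0 : combE (n + 2) (shear_coef c kp) e = zeroE F.
    by rewrite -combE_shear ?addn2 // -addn2 combE_pad.
  have kp_at0 : kp 0%N = 0.
    by have := e_indep _ _ kp0 0%N (ltn_addl n (ltn0Sn 1)); rewrite /shear_coef addr0.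
  have := e_indep _ _ kp0 i (ltn_addr 2 lt_in).
  by rewrite /shear_coef kp_at0 mulr0 if_same addr0 /kp lt_in.
- move=> x /e_span [n [k ->]].
  exists (n + 2)%N, (shear_coef (- c) (fun j => if (j < n)%N then k j else 0)).
  by rewrite -combE_shear ?addn2 // shearK -addn2 combE_pad.
Qed.

Lemma basisL_range g : basisFamL g -> basisL (fun v => exists n, v = g n).
Proof.
case/basisFamLE=> g_inL g_indep g_span; split; [|split].
- by move=> v [n ->].
- move=> m f f_inj f_g k sum0 i.
  have [idx f_idx] := fin_all_exists f_g.
  have idx_inj : injective idx by move=> i1 i2 eq12; apply: f_inj; rewrite !f_idx eq12.
  pose N := (\max_(i < m) idx i).+1.
  pose kg j := \sum_(i | idx i == j) k i.
  have lt_idx i' : (idx i' < N)%N by rewrite ltnS (leq_bigmax i').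
  have kg0 : combE N kg g = zeroE F.
    rewrite -sum0; apply: functional_extensionality => A; rewrite sumE_eval /combE.
    under eq_bigr do rewrite mulr_suml big_mkcond.
    rewrite exchange_big; apply: eq_bigr => i' _.
    by rewrite -big_mkcond (big_pred1 (Ordinal (lt_idx i'))) ?f_idx.
  have := g_indep _ _ kg0 _ (lt_idx i).
  by rewrite /kg (big_pred1 i) // => j; rewrite /= (inj_eq idx_inj).
- move=> x /g_span [n [k ->]]; exists n, (fun i : 'I_n => g i), (fun i => k i).
  by split; [move=> i; exists i | rewrite sumE_combE].
Qed.

Lemma translation_negates_diff (phi : GE F -> GE F) (Q x y : GE F) :
  (forall k x y, inGr x -> inGr y ->
     phi (addE (scaleE k x) y) = addE (scaleE k (phi x)) (phi y)) ->
  inGr x -> inGr y ->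
  phi x = addE (oppE x) Q -> phi y = addE (oppE y) Q ->
  phi (addE (scaleE (-1) x) y) = oppE (addE (scaleE (-1) x) y).
Proof.
move=> phi_lin Gx Gy phi_x phi_y; rewrite phi_lin // phi_x phi_y.
by apply: functional_extensionality => A; rewrite /addE /scaleE /oppE; ring.
Qed.

End GrassmannBasis.

Theorem mainTheorem13 (F : fieldType) (char0 : [pchar F] =i pred0) :
  ~ exists phi : GE F -> GE F,
      autE phi /\ involE phi /\ type4 phi /\
      exists (e : nat -> GE F) (P : GE F),
        basisFamL e /\ inGr P /\ hasLongSummand P /\
        forall n, phi (e n) = addE (oppE (e n)) (scaleE 2%:R P).
Proof.
move=> [phi [[_ [phi_lin _]] [_ [phi_type4 [e [P [e_basis [_ [_ phi_e]]]]]]]]].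
have [e_inL _ _] := (basisFamLE e).1 e_basis.
have sheared_basis := basisL_range (basisFamL_shear (-1) e_basis).
have [_] := phi_type4 _ sheared_basis (shear (-1) e 0) (ex_intro _ 0%N erefl).
apply; apply: translation_negates_diff; rewrite ?phi_e //.
- exact: (e_inL 1%N).1.
- exact: (e_inL 0%N).1.
Qed.
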